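(* Let $q=2$ and $z>4$. Consider the mean-field equation in $u\in[0,1)$, $$u=\frac{1-\exp(\Delta_{\beta,2,z}(u))}{1+\exp(\Delta_{\beta,2,z}(u))},\qquad\Delta_{\beta,2,z}(u):=-\frac{\beta}{2^{z-1}}\Big[(1+u)^{z-1}-(1-u)^{z-1}\Big].$$ There exist $0<\beta_0(2,z)<\beta_1(2,z)$ such that: for $0<\beta<\beta_0$ the mean-field equation has only the trivial solution $u=0$; for $\beta_0<\beta<\beta_1$ it has exactly two additional solutions $0<u_1<u_2<1$; for $\beta=\beta_0$ or $\beta\geq\beta_1$ it has exactly one additional solution $0<u_2<1$. *)

From Stdlib Require Import Reals.
Open Scope R_scope.

Definition Delta (beta : R) (z : nat) (u : R) : R :=
  - (beta / 2 ^ (z - 1)) * ((1 + u) ^ (z - 1) - (1 - u) ^ (z - 1)).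

Definition mf_rhs (beta : R) (z : nat) (u : R) : R :=
  (1 - exp (Delta beta z u)) / (1 + exp (Delta beta z u)).

Definition mf_solution (beta : R) (z : nat) (u : R) : Prop :=
  0 <= u < 1 /\ u = mf_rhs beta z u.

From Pilot Require Import Defs.
From Stdlib Require Import Reals Ranalysis5 Lra Lia.
From Coquelicot Require Import Coquelicot.
Open Scope R_scope.

(* Put n = z - 1 and u = (x - 1) / (x + 1), so that u in (0, 1) corresponds to
   x in (1, oo).  A nonzero solution u then corresponds to a zero of
   gap x = beta * ratio x - ln x, with ratio x = (x^n - 1) / (x + 1)^n, i.e. to a
   point where beta equals crit x = ln x / ratio x.
   The function x * gap' x = beta * x * ratio' x - 1 rises and then falls on
   (1, oo): the numerator of its derivative, differentiated twice more, has the
   sign of n - 2 - x.  It is negative at infinity and equals beta / beta1 - 1 at x = 1, where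
   beta1 = 2^n / n.  Hence gap, which vanishes at 1 and tends to -oo, either
   rises then falls (beta >= beta1: one zero) or falls, rises and falls
   (beta < beta1: up to two zeros).  The threshold beta0 is the minimum of crit
   on (1, oo), which exists and lies below beta1. *)

Lemma mult_pow_pred (n : nat) (y : R) : y <> 0 -> INR n * y ^ pred n = INR n * y ^ n / y.
Proof. intros hy. destruct n as [|n]; simpl; field; exact hy. Qed.

Lemma IVT_open (g : R -> R) s t :
  s < t -> (forall c, s <= c <= t -> continuity_pt g c) ->
  g s < 0 -> 0 < g t -> exists e, s < e < t /\ g e = 0.
Proof.
  intros hst hcont hs ht.
  destruct (IVT_interv g s t hcont hst hs ht) as [e [[[hse | <-] [het | ->]] he]];
    try lra.
  exists e. auto.
Qed.

Section DerivativeSign.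

Variables (f f' : R -> R) (a : R).
Hypothesis f_deriv : forall x, a <= x -> is_derive f x (f' x).

Lemma continuity_pt_of_deriv x : a <= x -> continuity_pt f x.
Proof.
  intros hx. apply derivable_continuous_pt. exists (f' x).
  apply is_derive_Reals, f_deriv, hx.
Qed.

Lemma lt_of_deriv_pos s t :
  a <= s < t -> (forall c, s < c < t -> 0 < f' c) -> f s < f t.
Proof.
  intros hst hpos.
  destruct (MVT_cor2 f f' s t (proj2 hst)) as [c [hc hcst]].
  - intros c hc. apply is_derive_Reals, f_deriv. lra.
  - specialize (hpos c hcst). nra.
Qed.

Lemma lt_of_deriv_neg s t :
  a <= s < t -> (forall c, s < c < t -> f' c < 0) -> f t < f s.
Proof.
  intros hst hneg.
  destruct (MVT_cor2 f f' s t (proj2 hst)) as [c [hc hcst]].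
  - intros c hc. apply is_derive_Reals, f_deriv. lra.
  - specialize (hneg c hcst). nra.
Qed.

Lemma zero_of_neg_pos s t :
  a <= s < t -> f s < 0 -> 0 < f t -> exists e, s < e < t /\ f e = 0.
Proof.
  intros hst hs ht. apply IVT_open; try lra.
  intros c hc. apply continuity_pt_of_deriv. lra.
Qed.

Lemma zero_of_pos_neg s t :
  a <= s < t -> 0 < f s -> f t < 0 -> exists e, s < e < t /\ f e = 0.
Proof.
  intros hst hs ht.
  destruct (IVT_open (fun x => - f x) s t) as [e [he hfe]]; try lra.
  - intros c hc. apply continuity_pt_opp, continuity_pt_of_deriv. lra.
  - exists e. split; [exact he | lra].
Qed.

End DerivativeSign.

Definition pos_then_neg (f : R -> R) (a : R) : Prop :=
  exists d, a < d /\ (forall x, a < x < d -> 0 < f x) /\ (forall x, d < x -> f x < 0).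

Definition neg_pos_neg (f : R -> R) (a p q : R) : Prop :=
  a <= p <= q /\ (forall x, a < x < p -> f x < 0) /\
  (forall x, p < x < q -> 0 < f x) /\ (forall x, q < x -> f x < 0).

Definition eventually_neg (f : R -> R) : Prop :=
  forall Y, exists X, Y < X /\ f X < 0.

Lemma eventually_neg_of_tail (f : R -> R) Y0 :
  (forall x, Y0 <= x -> f x < 0) -> eventually_neg f.
Proof.
  intros h Y. exists (Rmax Y Y0 + 1). split.
  - pose proof (Rmax_l Y Y0). lra.
  - apply h. pose proof (Rmax_r Y Y0). lra.
Qed.

Lemma pos_then_neg_sub c a : a < c -> pos_then_neg (fun x => c - x) a.
Proof. intros h. exists c. split; [lra | split; intros; lra]. Qed.

Lemma pos_then_neg_mulr (f g : R -> R) a :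
  (forall x, a < x -> 0 < g x) -> pos_then_neg f a ->
  pos_then_neg (fun x => f x * g x) a.
Proof.
  intros hg [d [hd [hpos hneg]]]. exists d. split; [exact hd | split].
  - intros x hx. specialize (hpos x hx). specialize (hg x ltac:(lra)). nra.
  - intros x hx. specialize (hneg x hx). specialize (hg x ltac:(lra)). nra.
Qed.

Lemma neg_pos_neg_mulr (f g : R -> R) a p q :
  (forall x, a < x -> 0 < g x) -> neg_pos_neg f a p q ->
  neg_pos_neg (fun x => f x * g x) a p q.
Proof.
  intros hg [hapq [h1 [h2 h3]]]. split; [exact hapq | split; [|split]].
  - intros x hx. specialize (h1 x hx). specialize (hg x ltac:(lra)). nra.
  - intros x hx. specialize (h2 x hx). specialize (hg x ltac:(lra)). nra.
  - intros x hx. specialize (h3 x hx). specialize (hg x ltac:(lra)). nra.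
Qed.

Lemma neg_pos_neg_of_pos_then_neg f a :
  pos_then_neg f a -> exists q, a < q /\ neg_pos_neg f a a q.
Proof.
  intros [d [hd [hpos hneg]]]. exists d. split; [exact hd|].
  split; [lra | split; [intros; lra | split; assumption]].
Qed.

Lemma rise_fall_of_deriv f f' a d :
  (forall x, a <= x -> is_derive f x (f' x)) -> a < d ->
  (forall x, a < x < d -> 0 < f' x) -> (forall x, d < x -> f' x < 0) ->
  (forall x y, a <= x < y -> y <= d -> f x < f y) /\
  (forall x y, d <= x < y -> f y < f x).
Proof.
  intros hf hd hpos hneg. split.
  - intros x y hxy hy. apply (lt_of_deriv_pos f f' a); auto.
    intros c hc. apply hpos. lra.
  - intros x y hxy. apply (lt_of_deriv_neg f f' a); [auto | lra |].
    intros c hc. apply hneg. lra.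
Qed.

Section UnimodalDerivative.

Variables (f f' : R -> R) (a : R).
Hypothesis f_deriv : forall x, a <= x -> is_derive f x (f' x).
Hypothesis f'_sign : pos_then_neg f' a.
Hypothesis f_eventually_neg : eventually_neg f.

Lemma pos_then_neg_of_deriv : 0 <= f a -> pos_then_neg f a.
Proof.
  destruct f'_sign as [d [hd [hpos hneg]]]. intros hfa.
  destruct (rise_fall_of_deriv f f' a d) as [rise fall]; auto.
  destruct (f_eventually_neg d) as [X [hX hfX]].
  assert (hfd : 0 < f d) by (assert (f a < f d) by (apply rise; lra); lra).
  destruct (zero_of_pos_neg f f' a f_deriv d X) as [e [he hfe]]; auto; try lra.
  exists e. split; [lra | split].
  - intros x hx. destruct (Rle_lt_dec x d).
    + assert (f a < f x) by (apply rise; lra). lra.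
    + assert (f e < f x) by (apply fall; lra). lra.
  - intros x hx. assert (f x < f e) by (apply fall; lra). lra.
Qed.

Lemma neg_pos_neg_of_deriv :
  f a < 0 -> exists p q, a < p /\ neg_pos_neg f a p q.
Proof.
  destruct f'_sign as [d [hd [hpos hneg]]]. intros hfa.
  destruct (rise_fall_of_deriv f f' a d) as [rise fall]; auto.
  destruct (Rle_lt_dec (f d) 0) as [hfd | hfd].
  - exists d, d. split; [exact hd|].
    split; [lra | split; [|split]]; intros x hx; try lra.
    + assert (f x < f d) by (apply rise; lra). lra.
    + assert (f x < f d) by (apply fall; lra). lra.
  - destruct (f_eventually_neg d) as [X [hX hfX]].
    destruct (zero_of_neg_pos f f' a f_deriv a d) as [p [hp hfp]]; auto; try lra.
    destruct (zero_of_pos_neg f f' a f_deriv d X) as [q [hq hfq]]; auto; try lra.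
    exists p, q. split; [lra|].
    split; [lra | split; [|split]]; intros x hx.
    + assert (f x < f p) by (apply rise; lra). lra.
    + destruct (Rle_lt_dec x d).
      * assert (f p < f x) by (apply rise; lra). lra.
      * assert (f q < f x) by (apply fall; lra). lra.
    + assert (f x < f q) by (apply fall; lra). lra.
Qed.

End UnimodalDerivative.

Section ZerosOfUnimodalDerivative.

Variables (E E' : R -> R) (a p q : R).
Hypothesis E_deriv : forall x, a <= x -> is_derive E x (E' x).
Hypothesis E'_shape : neg_pos_neg E' a p q.
Hypothesis E_at_a : E a = 0.

Lemma falls_to_valley x y : a <= x < y -> y <= p -> E y < E x.
Proof.
  destruct E'_shape as [hapq [h1 _]]. intros hxy hy.
  apply (lt_of_deriv_neg E E' a); auto. intros c hc. apply h1. lra.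
Qed.

Lemma rises_to_peak x y : p <= x < y -> y <= q -> E x < E y.
Proof.
  destruct E'_shape as [hapq [_ [h2 _]]]. intros hxy hy.
  apply (lt_of_deriv_pos E E' a); [auto | lra |]. intros c hc. apply h2. lra.
Qed.

Lemma falls_after_peak x y : q <= x < y -> E y < E x.
Proof.
  destruct E'_shape as [hapq [_ [_ h3]]]. intros hxy.
  apply (lt_of_deriv_neg E E' a); [auto | lra |]. intros c hc. apply h3. lra.
Qed.

Lemma neg_until_valley x : a < x <= p -> E x < 0.
Proof. intros hx. rewrite <- E_at_a. apply falls_to_valley; lra. Qed.

Lemma zero_beyond_valley y : a < y -> E y = 0 -> p < y.
Proof.
  intros hy hEy. destruct (Rle_lt_dec y p) as [hyp | hyp]; [|exact hyp].
  assert (E y < 0) by (apply neg_until_valley; lra). lra.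
Qed.

Lemma zero_unique_without_valley :
  p = a -> forall y1 y2, a < y1 -> a < y2 -> E y1 = 0 -> E y2 = 0 -> y1 = y2.
Proof.
  intros hpa.
  assert (beyond_peak : forall y, a < y -> E y = 0 -> q < y).
  { intros y hy hEy. destruct (Rle_lt_dec y q) as [hyq | hyq]; [|exact hyq].
    assert (E a < E y) by (apply rises_to_peak; lra). lra. }
  intros y1 y2 h1 h2 e1 e2.
  pose proof (beyond_peak y1 h1 e1). pose proof (beyond_peak y2 h2 e2).
  destruct (Rtotal_order y1 y2) as [l | [l | l]]; [| exact l |].
  - assert (E y2 < E y1) by (apply falls_after_peak; lra). lra.
  - assert (E y1 < E y2) by (apply falls_after_peak; lra). lra.
Qed.

(* Zeros on the same side of [q] coincide by strict monotonicity; among three,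
   two lie on the same side. *)
Lemma at_most_two_zeros y1 y2 y3 :
  a < y1 -> a < y2 -> a < y3 -> E y1 = 0 -> E y2 = 0 -> E y3 = 0 ->
  y1 = y2 \/ y1 = y3 \/ y2 = y3.
Proof.
  assert (same_side : forall u v, a < u -> a < v -> E u = 0 -> E v = 0 ->
            (u <= q /\ v <= q) \/ (q < u /\ q < v) -> u = v).
  { intros u v hu hv eu ev hside.
    pose proof (zero_beyond_valley u hu eu). pose proof (zero_beyond_valley v hv ev).
    destruct (Rtotal_order u v) as [l | [l | l]]; [| exact l |];
      destruct hside as [[] | []].
    - assert (E u < E v) by (apply rises_to_peak; lra). lra.
    - assert (E v < E u) by (apply falls_after_peak; lra). lra.
    - assert (E v < E u) by (apply rises_to_peak; lra). lra.
    - assert (E u < E v) by (apply falls_after_peak; lra). lra. }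
  intros h1 h2 h3 e1 e2 e3.
  destruct (Rle_lt_dec y1 q); destruct (Rle_lt_dec y2 q); destruct (Rle_lt_dec y3 q).
  all: first [ left; apply same_side; auto; lra
             | right; left; apply same_side; auto; lra
             | right; right; apply same_side; auto; lra ].
Qed.

Lemma nonpos_zero_is_peak :
  (forall x, a < x -> E x <= 0) -> forall y, a < y -> E y = 0 -> y = q.
Proof.
  destruct E'_shape as [hapq _]. intros hle y hy hEy.
  pose proof (zero_beyond_valley y hy hEy).
  assert (E q <= 0).
  { destruct (Rle_lt_dec q a) as [hqa | hqa]; [replace q with a by lra; lra | apply hle, hqa]. }
  destruct (Rtotal_order y q) as [l | [l | l]]; [| exact l |].
  - assert (E y < E q) by (apply rises_to_peak; lra). lra.
  - assert (E y < E q) by (apply falls_after_peak; lra). lra.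
Qed.

End ZerosOfUnimodalDerivative.

Definition ratio (n : nat) (x : R) : R := (x ^ n - 1) / (x + 1) ^ n.
Definition gap (n : nat) (b x : R) : R := b * ratio n x - ln x.
Definition crit (n : nat) (x : R) : R := ln x / ratio n x.

(* [xdratio n x = x * ratio' n x], so [xdgap n b x = x * gap' n b x];
   [dnum] is the numerator of the derivative of [xdratio]. *)
Definition xdratio (n : nat) (x : R) : R := INR n * (x ^ n + x) / ((x + 1) ^ n * (x + 1)).
Definition xdgap (n : nat) (b x : R) : R := b * xdratio n x - 1.
Definition dgap (n : nat) (b x : R) : R := xdgap n b x * / x.

Definition dnum (n : nat) (x : R) : R := - x ^ n + INR n * x ^ n / x - INR n * x + 1.
Definition dnum' (n : nat) (x : R) : R :=
  INR n * (INR n - 1) * x ^ n / (x * x) - INR n * x ^ n / x - INR n.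
Definition dnum'' (n : nat) (x : R) : R :=
  (INR n - 2 - x) * (INR n * (INR n - 1) * x ^ n / (x * x * x)).
Definition xdgap' (n : nat) (b x : R) : R :=
  dnum n x * (b * INR n / ((x + 1) ^ n * (x + 1) * (x + 1))).

Definition beta1 (n : nat) : R := 2 ^ n / INR n.

Lemma is_derive_dnum' n x : 0 < x -> is_derive (dnum' n) x (dnum'' n x).
Proof.
  intros hx. unfold dnum', dnum''. auto_derive; [repeat split; nra|].
  rewrite mult_pow_pred by lra. field. lra.
Qed.

Lemma is_derive_dnum n x : 0 < x -> is_derive (dnum n) x (dnum' n x).
Proof.
  intros hx. unfold dnum, dnum'. auto_derive; [repeat split; nra|].
  rewrite mult_pow_pred by lra. field. lra.
Qed.

Lemma is_derive_xdgap n b x : 0 < x -> is_derive (xdgap n b) x (xdgap' n b x).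
Proof.
  intros hx. assert (0 < (x + 1) ^ n) by (apply pow_lt; lra).
  unfold xdgap, xdratio, xdgap', dnum. auto_derive; [repeat split; nra|].
  rewrite !mult_pow_pred by lra. field. lra.
Qed.

Lemma is_derive_gap n b x : 0 < x -> is_derive (gap n b) x (dgap n b x).
Proof.
  intros hx. assert (0 < (x + 1) ^ n) by (apply pow_lt; lra).
  unfold gap, ratio, dgap, xdgap, xdratio. auto_derive; [repeat split; lra|].
  rewrite !mult_pow_pred by lra. field. lra.
Qed.

Section MeanFieldGap.

Variable n : nat.
Hypothesis n_ge4 : (4 <= n)%nat.

Let INR_n_ge4 : 4 <= INR n.
Proof. apply le_INR in n_ge4. simpl in n_ge4. lra. Qed.

Lemma dnum''_pos_then_neg : pos_then_neg (dnum'' n) 1.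
Proof.
  apply (pos_then_neg_mulr (fun x => INR n - 2 - x)).
  - intros x hx. assert (0 < x ^ n) by (apply pow_lt; lra).
    apply Rdiv_lt_0_compat; [|nra]. apply Rmult_lt_0_compat; [nra | lra].
  - apply pos_then_neg_sub. lra.
Qed.

Lemma dnum'_pos_then_neg : pos_then_neg (dnum' n) 1.
Proof.
  apply (pos_then_neg_of_deriv _ (dnum'' n)).
  - intros x hx. apply is_derive_dnum'. lra.
  - exact dnum''_pos_then_neg.
  - apply (eventually_neg_of_tail _ (INR n)). intros x hx.
    assert (0 < x ^ n / (x * x)) by (apply Rdiv_lt_0_compat; [apply pow_lt |]; nra).
    replace (dnum' n x) with (INR n * (x ^ n / (x * x)) * (INR n - 1 - x) - INR n)
      by (unfold dnum'; field; lra).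
    assert (0 < INR n * (x ^ n / (x * x))) by (apply Rmult_lt_0_compat; lra).
    nra.
  - unfold dnum'. rewrite pow1. field_simplify. nra.
Qed.

Lemma dnum_pos_then_neg : pos_then_neg (dnum n) 1.
Proof.
  apply (pos_then_neg_of_deriv _ (dnum' n)).
  - intros x hx. apply is_derive_dnum. lra.
  - exact dnum'_pos_then_neg.
  - apply (eventually_neg_of_tail _ (INR n)). intros x hx.
    assert (0 < x ^ n / x) by (apply Rdiv_lt_0_compat; [apply pow_lt |]; lra).
    replace (dnum n x) with (x ^ n / x * (INR n - x) - INR n * x + 1)
      by (unfold dnum; field; lra).
    nra.
  - unfold dnum. rewrite pow1. lra.
Qed.

Lemma xdgap'_pos_then_neg b : 0 < b -> pos_then_neg (xdgap' n b) 1.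
Proof.
  intros hb. apply (pos_then_neg_mulr (dnum n)); [|exact dnum_pos_then_neg].
  intros x hx. assert (0 < (x + 1) ^ n) by (apply pow_lt; lra).
  apply Rdiv_lt_0_compat; nra.
Qed.

Lemma xdgap_eventually_neg b : 0 < b -> eventually_neg (xdgap n b).
Proof.
  intros hb. apply (eventually_neg_of_tail _ (2 * b * INR n + 2)). intros x hx.
  assert (hx1 : 1 <= x) by nra.
  assert (x <= x ^ n) by (rewrite <- (pow_1 x) at 1; apply Rle_pow; [exact hx1 | lia]).
  assert (x ^ n <= (x + 1) ^ n) by (apply pow_incr; nra).
  assert (hden : 0 < (x + 1) ^ n * (x + 1)) by nra.
  assert (b * (INR n * (x ^ n + x)) < (x + 1) ^ n * (x + 1)) by nra.
  unfold xdgap, xdratio.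
  replace (b * (INR n * (x ^ n + x) / ((x + 1) ^ n * (x + 1))))
    with (b * (INR n * (x ^ n + x)) / ((x + 1) ^ n * (x + 1))) by (field; lra).
  apply (Rmult_lt_reg_r ((x + 1) ^ n * (x + 1))); [exact hden|].
  field_simplify; lra.
Qed.

Lemma xdgap_at_1 b : xdgap n b 1 = b / beta1 n - 1.
Proof.
  unfold xdgap, xdratio, beta1. rewrite pow1. replace (1 + 1) with 2 by ring.
  assert (0 < 2 ^ n) by (apply pow_lt; lra). field. lra.
Qed.

Lemma beta1_pos : 0 < beta1 n.
Proof. apply Rdiv_lt_0_compat; [apply pow_lt |]; lra. Qed.

Lemma gap_shape b : 0 < b -> exists p q, neg_pos_neg (dgap n b) 1 p q /\
  (b < beta1 n -> 1 < p) /\ (beta1 n <= b -> p = 1 /\ 1 < q).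
Proof.
  intros hb. pose proof beta1_pos.
  assert (hderiv : forall x, 1 <= x -> is_derive (xdgap n b) x (xdgap' n b x))
    by (intros; apply is_derive_xdgap; lra).
  assert (to_dgap : forall p q, neg_pos_neg (xdgap n b) 1 p q -> neg_pos_neg (dgap n b) 1 p q).
  { intros p q. apply (neg_pos_neg_mulr (xdgap n b) Rinv).
    intros x hx. apply Rinv_0_lt_compat. lra. }
  destruct (Rlt_le_dec b (beta1 n)) as [hlt | hle].
  - destruct (neg_pos_neg_of_deriv (xdgap n b) (xdgap' n b) 1) as [p [q [hp hshape]]];
      auto using xdgap'_pos_then_neg, xdgap_eventually_neg.
    + rewrite xdgap_at_1.
      assert (b / beta1 n < 1) by (apply Rlt_div_l; lra). lra.
    + exists p, q. split; [auto | split; intros; [exact hp | lra]].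
  - destruct (neg_pos_neg_of_pos_then_neg (xdgap n b) 1) as [q [hq hshape]].
    + apply (pos_then_neg_of_deriv _ (xdgap' n b));
        auto using xdgap'_pos_then_neg, xdgap_eventually_neg.
      rewrite xdgap_at_1.
      assert (1 <= b / beta1 n) by (apply Rle_div_r; lra). lra.
    + exists 1, q. split; [auto | split; intros; [lra | auto]].
Qed.

Lemma ratio_bounds x : 1 < x -> 0 < ratio n x < 1.
Proof.
  intros hx. unfold ratio.
  assert (1 < x ^ n) by (apply Rlt_pow_R1; [lra | lia]).
  assert (x ^ n <= (x + 1) ^ n) by (apply pow_incr; lra).
  split; [apply Rdiv_lt_0_compat; lra | apply Rlt_div_l; lra].
Qed.

Lemma gap_factor b x : 1 < x -> gap n b x = ratio n x * (b - crit n x).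
Proof.
  intros hx. pose proof (ratio_bounds x hx). unfold gap, crit. field. lra.
Qed.

Lemma gap_at_1 b : gap n b 1 = 0.
Proof. unfold gap, ratio. rewrite pow1, ln_1. field. apply pow_nonzero. lra. Qed.

Lemma crit_pos x : 1 < x -> 0 < crit n x.
Proof.
  intros hx. pose proof (ratio_bounds x hx). apply Rdiv_lt_0_compat; [|lra].
  rewrite <- ln_1. apply ln_increasing; lra.
Qed.

Lemma crit_continuous x : 1 < x -> continuity_pt (crit n) x.
Proof.
  intros hx. pose proof (ratio_bounds x hx).
  apply derivable_continuous_pt, ex_derive_Reals_0. unfold crit, ratio in *.
  assert (0 < (x + 1) ^ n) by (apply pow_lt; lra).
  auto_derive. repeat split; lra.
Qed.

Lemma crit_gt_far c x : 0 <= c -> exp c < x -> c < crit n x.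
Proof.
  intros hc hx. pose proof (exp_ineq1_le c).
  assert (hlnx : c < ln x) by (rewrite <- (ln_exp c); apply ln_increasing; [apply exp_pos | exact hx]).
  pose proof (ratio_bounds x ltac:(lra)).
  assert (ln x <= crit n x) by (apply Rle_div_r; nra).
  lra.
Qed.

Lemma gap_eventually_neg b : 0 < b -> eventually_neg (gap n b).
Proof.
  intros hb. apply (eventually_neg_of_tail _ (exp b + 1)). intros x hx.
  pose proof (exp_pos b). rewrite gap_factor by lra.
  pose proof (ratio_bounds x ltac:(lra)). pose proof (crit_gt_far b x ltac:(lra) ltac:(lra)).
  nra.
Qed.

Let gap_deriv b x : 1 <= x -> is_derive (gap n b) x (dgap n b x).
Proof. intros hx. apply is_derive_gap. lra. Qed.

Lemma crit_below_beta1 : exists xs, 1 < xs /\ crit n xs < beta1 n.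
Proof.
  destruct (gap_shape (beta1 n) beta1_pos) as [p [q [hshape [_ hge]]]].
  destruct (hge (Rle_refl _)) as [-> hq].
  pose proof (rises_to_peak _ _ 1 1 q (gap_deriv _) hshape 1 q ltac:(lra) ltac:(lra)) as hrise.
  rewrite gap_at_1, gap_factor in hrise by exact hq.
  exists q. split; [exact hq|]. pose proof (ratio_bounds q hq). nra.
Qed.

Lemma crit_gt_near_1 c : 0 < c < beta1 n ->
  exists p, 1 < p /\ forall x, 1 < x <= p -> c < crit n x.
Proof.
  intros hc. destruct (gap_shape c ltac:(lra)) as [p [q [hshape [hlt _]]]].
  exists p. split; [apply hlt; lra|]. intros x hx.
  pose proof (neg_until_valley _ _ 1 p q (gap_deriv c) hshape (gap_at_1 c) x hx) as hneg.
  rewrite gap_factor in hneg by lra. pose proof (ratio_bounds x ltac:(lra)). nra.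
Qed.

(* Near 1 and near infinity [crit] exceeds its value at a point below [beta1],
   so its infimum over (1, oo) is a minimum on a compact interval. *)
Lemma crit_attains_min : exists x0, 1 < x0 /\ crit n x0 < beta1 n /\
  forall x, 1 < x -> crit n x0 <= crit n x.
Proof.
  destruct crit_below_beta1 as [xs [hxs hbs]].
  pose proof (crit_pos xs hxs) as hbs0.
  destruct (crit_gt_near_1 (crit n xs) ltac:(lra)) as [p [hp near]].
  assert (hpxs : p < xs).
  { destruct (Rlt_le_dec p xs) as [h | h]; [exact h|].
    specialize (near xs ltac:(lra)). lra. }
  set (X := exp (crit n xs) + 1).
  assert (far : forall x, X <= x -> crit n xs < crit n x)
    by (intros x hx; apply crit_gt_far; unfold X in hx; lra).
  assert (hxsX : xs < X).
  { destruct (Rlt_le_dec xs X) as [h | h]; [exact h|]. specialize (far xs h). lra. }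
  destruct (continuity_ab_min (crit n) p X) as [x0 [hmin hx0]]; [lra | |].
  { intros c hc. apply crit_continuous. lra. }
  assert (crit n x0 <= crit n xs) by (apply hmin; lra).
  exists x0. split; [lra | split; [lra|]].
  intros x hx. destruct (Rle_lt_dec x p); [specialize (near x ltac:(lra)); lra|].
  destruct (Rle_lt_dec X x); [specialize (far x ltac:(lra)); lra|].
  apply hmin. lra.
Qed.

Section Regimes.

Variable x0 : R.
Hypothesis x0_gt_1 : 1 < x0.
Hypothesis x0_below_beta1 : crit n x0 < beta1 n.
Hypothesis x0_min : forall x, 1 < x -> crit n x0 <= crit n x.

Lemma gap_no_zero_below_min b x : b < crit n x0 -> 1 < x -> gap n b x <> 0.
Proof.
  intros hb hx. rewrite gap_factor by exact hx.
  pose proof (ratio_bounds x hx). pose proof (x0_min x hx). intros e. nra.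
Qed.

Lemma gap_pos_at_min b : crit n x0 < b -> 0 < gap n b x0.
Proof.
  intros hb. rewrite gap_factor by exact x0_gt_1.
  pose proof (ratio_bounds x0 x0_gt_1). nra.
Qed.

Lemma gap_two_zeros b : crit n x0 < b < beta1 n ->
  exists x1 x2, 1 < x1 < x2 /\ gap n b x1 = 0 /\ gap n b x2 = 0 /\
    forall x, 1 < x -> gap n b x = 0 -> x = x1 \/ x = x2.
Proof.
  intros hb. pose proof (crit_pos x0 x0_gt_1).
  pose proof (gap_pos_at_min b (proj1 hb)) as hpos.
  destruct (gap_shape b ltac:(lra)) as [p [q [hshape [hlt _]]]].
  specialize (hlt (proj2 hb)).
  pose proof (neg_until_valley _ _ 1 p q (gap_deriv b) hshape (gap_at_1 b)) as hneg.
  assert (hpx0 : p < x0).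
  { destruct (Rlt_le_dec p x0) as [h | h]; [exact h|].
    specialize (hneg x0 ltac:(lra)). lra. }
  destruct (zero_of_neg_pos _ _ 1 (gap_deriv b) p x0) as [x1 [hx1 e1]];
    [lra | apply hneg; lra | exact hpos |].
  destruct (gap_eventually_neg b ltac:(lra) x0) as [X [hX hgX]].
  destruct (zero_of_pos_neg _ _ 1 (gap_deriv b) x0 X) as [x2 [hx2 e2]]; [lra | exact hpos | exact hgX |].
  exists x1, x2. split; [lra | split; [exact e1 | split; [exact e2|]]].
  intros x hx e.
  destruct (at_most_two_zeros _ _ 1 p q (gap_deriv b) hshape (gap_at_1 b) x x1 x2)
    as [h | [h | h]]; auto; lra.
Qed.

Lemma gap_unique_zero b : b = crit n x0 \/ beta1 n <= b ->
  exists x2, 1 < x2 /\ gap n b x2 = 0 /\ forall x, 1 < x -> gap n b x = 0 -> x = x2.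
Proof.
  intros hb. pose proof (crit_pos x0 x0_gt_1).
  destruct (gap_shape b ltac:(lra)) as [p [q [hshape [_ hge]]]].
  destruct hb as [-> | hb].
  - assert (hzero : gap n (crit n x0) x0 = 0) by (rewrite gap_factor by exact x0_gt_1; ring).
    assert (hnonpos : forall x, 1 < x -> gap n (crit n x0) x <= 0).
    { intros x hx. rewrite gap_factor by exact hx.
      pose proof (ratio_bounds x hx). pose proof (x0_min x hx). nra. }
    pose proof (nonpos_zero_is_peak _ _ 1 p q (gap_deriv _) hshape (gap_at_1 _) hnonpos) as peak.
    exists x0. split; [exact x0_gt_1 | split; [exact hzero|]].
    intros x hx e. rewrite (peak x hx e), (peak x0 x0_gt_1 hzero). reflexivity.
  - destruct (hge hb) as [hp1 _].
    pose proof (gap_pos_at_min b ltac:(lra)) as hpos.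
    destruct (gap_eventually_neg b ltac:(lra) x0) as [X [hX hgX]].
    destruct (zero_of_pos_neg _ _ 1 (gap_deriv b) x0 X) as [x2 [hx2 e2]]; [lra | exact hpos | exact hgX |].
    exists x2. split; [lra | split; [exact e2|]].
    intros x hx e.
    apply (zero_unique_without_valley _ _ 1 p q (gap_deriv b) hshape (gap_at_1 b) hp1); auto; lra.
Qed.

End Regimes.

End MeanFieldGap.

Definition cayley (x : R) : R := (x - 1) / (x + 1).

Lemma cayley_inj x y : -1 < x -> -1 < y -> cayley x = cayley y -> x = y.
Proof.
  unfold cayley. intros hx hy e.
  apply (f_equal (fun t => t * ((x + 1) * (y + 1)))) in e.
  field_simplify in e; lra.
Qed.

Lemma cayley_lt x y : -1 < x < y -> cayley x < cayley y.
Proof.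
  intros h. unfold cayley. apply (Rmult_lt_reg_r ((x + 1) * (y + 1))); [nra|].
  field_simplify; nra.
Qed.

Lemma cayley_bounds x : 1 < x -> 0 < cayley x < 1.
Proof.
  intros hx. unfold cayley.
  split; [apply Rdiv_lt_0_compat | apply Rlt_div_l]; lra.
Qed.

Lemma cayley_surj u : -1 < u < 1 -> cayley ((1 + u) / (1 - u)) = u.
Proof. intros hu. unfold cayley. field. lra. Qed.

Lemma Delta_cayley (b : R) (z : nat) (x : R) : -1 < x ->
  Defs.Delta b z (cayley x) = - (b * ratio (z - 1) x).
Proof.
  intros hx. unfold Defs.Delta, ratio, cayley. set (n := (z - 1)%nat).
  set (w := 2 / (x + 1)).
  assert (hplus : 1 + (x - 1) / (x + 1) = x * w) by (unfold w; field; lra).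
  assert (hminus : 1 - (x - 1) / (x + 1) = w) by (unfold w; field; lra).
  assert (hw : w ^ n * (x + 1) ^ n = 2 ^ n).
  { rewrite <- Rpow_mult_distr. f_equal. unfold w. field. lra. }
  assert (0 < w ^ n) by (apply pow_lt; unfold w; apply Rdiv_lt_0_compat; lra).
  assert (0 < (x + 1) ^ n) by (apply pow_lt; lra).
  rewrite hplus, hminus, Rpow_mult_distr, <- hw. field. lra.
Qed.

Lemma mf_rhs_as_cayley (b : R) (z : nat) (u : R) : mf_rhs b z u = cayley (exp (- Defs.Delta b z u)).
Proof.
  unfold mf_rhs, cayley. rewrite exp_Ropp. pose proof (exp_pos (Defs.Delta b z u)).
  field. split; lra.
Qed.

Lemma mf_solution_cayley (b : R) (z : nat) (x : R) : 1 < x ->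
  mf_solution b z (cayley x) <-> gap (z - 1) b x = 0.
Proof.
  intros hx. unfold mf_solution, gap.
  rewrite mf_rhs_as_cayley, Delta_cayley, Ropp_involutive by lra.
  pose proof (cayley_bounds x hx). pose proof (exp_pos (b * ratio (z - 1) x)).
  split.
  - intros [_ e]. apply cayley_inj in e; [|lra|lra].
    assert (ln x = b * ratio (z - 1) x) by (rewrite e at 1; apply ln_exp).
    lra.
  - intros e. split; [lra|]. f_equal.
    rewrite <- (exp_ln x) at 1 by lra. f_equal. lra.
Qed.

Lemma mf_solution_0 (b : R) (z : nat) : mf_solution b z 0.
Proof.
  split; [lra|]. unfold mf_rhs, Defs.Delta.
  rewrite Rplus_0_r, Rminus_0_r, Rminus_diag, Rmult_0_r, exp_0. field.
Qed.

Lemma mf_solution_iff (b : R) (z : nat) (u : R) : mf_solution b z u <->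
  u = 0 \/ exists x, 1 < x /\ gap (z - 1) b x = 0 /\ u = cayley x.
Proof.
  split.
  - intros hu. destruct (Req_dec u 0) as [-> | hu0]; [left; reflexivity | right].
    destruct (proj1 hu) as [hu_ge0 hu_lt1].
    assert (hu_pos : 0 < u) by (destruct hu_ge0 as [h | h]; [exact h | congruence]).
    set (x := (1 + u) / (1 - u)).
    assert (hux : u = cayley x) by (symmetry; apply cayley_surj; lra).
    assert (hx : 1 < x) by (apply Rlt_div_r; lra).
    exists x. split; [exact hx | split; [| exact hux]].
    apply mf_solution_cayley; [exact hx|]. rewrite <- hux. exact hu.
  - intros [-> | [x [hx [e ->]]]];
      [apply mf_solution_0 | apply mf_solution_cayley; assumption].
Qed.
Theorem lemma5p5 (z : nat) (hz : (4 < z)%nat) :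
  exists beta0 beta1 : R,
    0 < beta0 < beta1 /\
    (forall beta, 0 < beta < beta0 ->
       forall u, mf_solution beta z u -> u = 0) /\
    (forall beta, beta0 < beta < beta1 ->
       exists u1 u2, 0 < u1 < u2 /\ u2 < 1 /\
         mf_solution beta z u1 /\ mf_solution beta z u2 /\
         forall u, mf_solution beta z u -> u = 0 \/ u = u1 \/ u = u2) /\
    (forall beta, beta = beta0 \/ beta1 <= beta ->
       exists u2, 0 < u2 < 1 /\ mf_solution beta z u2 /\
         forall u, mf_solution beta z u -> u = 0 \/ u = u2).
Proof.
  assert (hn : (4 <= z - 1)%nat) by lia.
  destruct (crit_attains_min (z - 1) hn) as [x0 [hx0 [hbelow hmin]]].
  exists (crit (z - 1) x0), (beta1 (z - 1)).
  split; [split; [apply crit_pos; assumption | exact hbelow] | split; [| split]].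
  - intros b hb u [-> | [x [hx [e _]]]]%mf_solution_iff; [reflexivity|].
    destruct (gap_no_zero_below_min _ hn x0 hmin b x (proj2 hb) hx e).
  - intros b hb.
    destruct (gap_two_zeros _ hn x0 hx0 b hb) as [x1 [x2 [hx12 [e1 [e2 huniq]]]]].
    pose proof (cayley_bounds x1 ltac:(lra)). pose proof (cayley_bounds x2 ltac:(lra)).
    exists (cayley x1), (cayley x2).
    split; [split; [lra | apply cayley_lt; lra] | split; [lra | split; [| split]]].
    + apply mf_solution_cayley; [lra | exact e1].
    + apply mf_solution_cayley; [lra | exact e2].
    + intros u [-> | [x [hx [e ->]]]]%mf_solution_iff; [left; reflexivity | right].
      destruct (huniq x hx e) as [-> | ->]; [left | right]; reflexivity.
  - intros b hb.
    destruct (gap_unique_zero _ hn x0 hx0 hbelow hmin b hb) as [x2 [hx2 [e2 huniq]]].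
    exists (cayley x2).
    split; [apply cayley_bounds, hx2 | split; [apply mf_solution_cayley; assumption |]].
    intros u [-> | [x [hx [e ->]]]]%mf_solution_iff; [left; reflexivity | right].
    rewrite (huniq x hx e). reflexivity.
Qed.
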